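(* The prime $p = 67$ is the unique prime $p < 2000$ with the following property: there is no irrational real number $\xi$ such that the simple continued fraction expansions of $\xi$ and of $p\xi$ both consist, from some point on, only of the terms $1$ and $2$. *)

From Stdlib Require Import Reals ZArith Znumtheory.
Open Scope R_scope.

(* floor of a real number: Int_part r = up r - 1 = floor r *)
Definition rfloor (x : R) : Z := Int_part x.

Fixpoint cf_complete (x : R) (n : nat) : R :=
  match n with
  | O => x
  | S m => / (cf_complete x m - IZR (rfloor (cf_complete x m)))
  end.

(* n-th partial quotient a_n = floor x_n (well defined for all n when x is
   irrational). *)
Definition cf_term (x : R) (n : nat) : Z := rfloor (cf_complete x n).

Definition irrational (x : R) : Prop :=
  ~ exists (a b : Z), b <> 0%Z /\ x = IZR a / IZR b.

Definition eventually_1_2 (x : R) : Prop :=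
  exists N : nat, forall n : nat, (N <= n)%nat ->
    cf_term x n = 1%Z \/ cf_term x n = 2%Z.

From Stdlib Require Import Reals ZArith Znumtheory.
From Stdlib Require Import Lia Lra Psatz List Bool.
Import ListNotations.
Open Scope R_scope.

(* For p <> 67 a witness is a quadratic irrational xi = (P + sqrt D)/Q such that the eventually
   periodic expansions of xi and of p xi = (pP + sqrt (p^2 D))/Q have periods made of 1s and 2s;
   these expansions are computed exactly on integer pairs (P, Q).

   For p = 67, suppose that xi and eta = 67 xi both have all partial quotients equal to 1 or 2
   from some point on.  Complete quotients x of xi and y of eta are then related by
   y = (a x + b)/(c x + d) with a d - b c = ±67, and choosing the two indices so that the
   convergent denominators of xi and eta are comparable gives |a|, |b| <= 16 and |c|, |d| <= 33.
   For each of the finitely many such matrices, feeding the digits 1, 2 of x into the Möbius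
   map and reading off the digits of y always produces a digit of y other than 1 and 2. *)

(** * Continued fractions *)

Lemma rfloor_eq (x : R) (k : Z) : IZR k <= x < IZR k + 1 -> rfloor x = k.
Proof.
  intros [Hk Hk1]. unfold rfloor, Int_part.
  enough (up x = (k + 1)%Z) by lia.
  symmetry. apply tech_up; rewrite plus_IZR; simpl; lra.
Qed.

Lemma rfloor_bounds (x : R) : IZR (rfloor x) <= x < IZR (rfloor x) + 1.
Proof. unfold rfloor. destruct (base_Int_part x). lra. Qed.

Lemma rfloor_IZR (k : Z) : rfloor (IZR k) = k.
Proof. apply rfloor_eq. lra. Qed.

Lemma rfloor_div (u Q : Z) (t : R) :
  (0 < Q)%Z -> IZR u <= t < IZR u + 1 -> rfloor (t / IZR Q) = (u / Q)%Z.
Proof.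
  intros HQ Ht. set (k := (u / Q)%Z).
  assert (Hk1 : (k * Q <= u)%Z) by (rewrite Z.mul_comm; apply Z.mul_div_le, HQ).
  assert (Hk2 : (u + 1 <= (k + 1) * Q)%Z).
  { pose proof (Z.mul_succ_div_gt u Q HQ). unfold Z.succ in *. lia. }
  apply IZR_le in Hk1, Hk2. rewrite mult_IZR in Hk1. rewrite mult_IZR, !plus_IZR in Hk2.
  apply IZR_lt in HQ. apply rfloor_eq. split.
  - apply Rmult_le_reg_r with (IZR Q); [lra|]. unfold Rdiv. rewrite Rmult_assoc, Rinv_l; lra.
  - apply Rmult_lt_reg_r with (IZR Q); [lra|]. unfold Rdiv. rewrite Rmult_assoc, Rinv_l; lra.
Qed.

Lemma cf_complete_S (x : R) (n : nat) :
  cf_complete x (S n) = / (cf_complete x n - IZR (cf_term x n)).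
Proof. reflexivity. Qed.

Lemma cf_complete_shift (x : R) (n : nat) :
  cf_complete x (S n) = cf_complete (cf_complete x 1) n.
Proof.
  induction n as [|n IH]; [reflexivity|].
  rewrite cf_complete_S. unfold cf_term. rewrite IH. reflexivity.
Qed.

Lemma cf_complete_eq0_add (x : R) (n j : nat) :
  cf_complete x n = 0 -> cf_complete x (n + j) = 0.
Proof.
  intros H0. induction j as [|j IH]; [now rewrite Nat.add_0_r|].
  rewrite Nat.add_succ_r, cf_complete_S. unfold cf_term.
  rewrite IH, (rfloor_IZR 0), Rminus_0_r. apply Rinv_0.
Qed.

Lemma rational_cf_complete_eq0 (a b : Z) : exists n, cf_complete (IZR a / IZR b) n = 0.
Proof.
  assert (Hnonneg : forall b, (0 <= b)%Z -> forall a, exists n, cf_complete (IZR a / IZR b) n = 0).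
  { clear a b. intros b Hb. generalize Hb. pattern b. apply Z_lt_induction; [|exact Hb].
    clear b Hb. intros b IH Hb a.
    destruct (Z.eq_dec b 0) as [->|Hb0].
    { exists 0%nat. simpl. unfold Rdiv. rewrite Rinv_0. ring. }
    assert (Hb' : (0 < b)%Z) by lia.
    pose proof (Z.mod_pos_bound a b Hb') as Hr.
    set (k := (a / b)%Z). set (r := (a mod b)%Z).
    assert (Ea : IZR a = IZR k * IZR b + IZR r).
    { rewrite <- mult_IZR, <- plus_IZR. f_equal. pose proof (Z.div_mod a b). lia. }
    assert (Hr' : 0 <= IZR r < IZR b) by (split; [apply IZR_le | apply IZR_lt]; lia).
    assert (Hfl : rfloor (IZR a / IZR b) = k) by (apply rfloor_div; [exact Hb' | lra]).
    assert (H1 : cf_complete (IZR a / IZR b) 1 = IZR b / IZR r).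
    { simpl. unfold cf_term. simpl. rewrite Hfl.
      replace (IZR a / IZR b - IZR k) with (IZR r / IZR b) by (rewrite Ea; field; lra).
      apply Rinv_div. }
    destruct (IH r ltac:(lia) ltac:(lia) b) as [n Hn]. exists (S n).
    rewrite cf_complete_shift, H1. exact Hn. }
  destruct (Z_le_gt_dec 0 b) as [Hb|Hb]; [now apply Hnonneg|].
  destruct (Hnonneg (- b)%Z ltac:(lia) (- a)%Z) as [n Hn]. exists n.
  rewrite !opp_IZR in Hn. replace (IZR a / IZR b) with (- IZR a / - IZR b); [exact Hn|].
  field. apply not_0_IZR. lia.
Qed.

Definition tail_12 (z : R) (N : nat) : Prop :=
  forall n, (N <= n)%nat -> cf_term z n = 1%Z \/ cf_term z n = 2%Z.

Section EventuallyOneTwo.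

Variable z : R.

Hypothesis Hz : eventually_1_2 z.

Lemma cf_complete_neq0 (n : nat) : cf_complete z n <> 0.
Proof.
  intros H0. destruct Hz as [N HN].
  assert (Hterm : cf_term z (n + N) = 0%Z).
  { unfold cf_term. rewrite (cf_complete_eq0_add _ _ _ H0). apply (rfloor_IZR 0). }
  destruct (HN (n + N)%nat) as [E|E]; [lia|congruence|congruence].
Qed.

Lemma cf_frac_bounds (n : nat) : 0 < cf_complete z n - IZR (cf_term z n) < 1.
Proof.
  pose proof (rfloor_bounds (cf_complete z n)) as Hfl. fold (cf_term z n) in Hfl.
  enough (cf_complete z n - IZR (cf_term z n) <> 0) by lra.
  intros H0. apply (cf_complete_neq0 (S n)). rewrite cf_complete_S, H0. apply Rinv_0.
Qed.

Lemma cf_complete_S_mul (n : nat) :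
  cf_complete z (S n) * (cf_complete z n - IZR (cf_term z n)) = 1.
Proof. rewrite cf_complete_S. field. pose proof (cf_frac_bounds n). lra. Qed.

Lemma cf_complete_S_gt1 (n : nat) : 1 < cf_complete z (S n).
Proof.
  pose proof (cf_frac_bounds n). pose proof (cf_complete_S_mul n). nra.
Qed.

Lemma cf_term_ge1 (n : nat) : (1 <= n)%nat -> (1 <= cf_term z n)%Z.
Proof.
  intros Hn. destruct n as [|n]; [lia|].
  pose proof (cf_complete_S_gt1 n). pose proof (rfloor_bounds (cf_complete z (S n))).
  enough (Hpos : 0 < IZR (cf_term z (S n))) by (apply lt_IZR in Hpos; lia).
  unfold cf_term. lra.
Qed.

Lemma cf_term_eq (n : nat) (k : Z) :
  IZR k <= cf_complete z n <= IZR k + 1 -> cf_term z n = k.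
Proof.
  intros [Hlo [Hhi|Heq]]; [now apply rfloor_eq|].
  exfalso. pose proof (cf_frac_bounds n) as Hfr.
  unfold cf_term in Hfr. rewrite Heq, <- succ_IZR, rfloor_IZR, succ_IZR in Hfr. lra.
Qed.

End EventuallyOneTwo.

Lemma eventually_1_2_irrational (z : R) : eventually_1_2 z -> irrational z.
Proof.
  intros Hz [a [b [_ ->]]].
  destruct (rational_cf_complete_eq0 a b) as [n Hn].
  exact (cf_complete_neq0 _ Hz n Hn).
Qed.

(* [15/11, 11/4] contains [[1; 2, 1, 2, ...], [2; 1, 2, 1, ...]] = [(1 + sqrt 3)/2, 1 + sqrt 3]. *)
Lemma tail_12_bounds (z : R) (N : nat) :
  tail_12 z N -> forall n, (N <= n)%nat -> 15/11 < cf_complete z n < 11/4.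
Proof.
  intros HN. assert (Hz : eventually_1_2 z) by (exists N; exact HN).
  assert (Hdigit : forall n, (N <= n)%nat -> 1 <= IZR (cf_term z n) <= 2).
  { intros n Hn. destruct (HN n Hn) as [E|E]; rewrite E; simpl; lra. }
  assert (Hstep : forall n, cf_complete z n = IZR (cf_term z n) + / cf_complete z (S n)).
  { intros n. rewrite cf_complete_S, Rinv_inv. ring. }
  assert (H3 : forall n, (N <= n)%nat -> cf_complete z n < 3).
  { intros n Hn. pose proof (Hdigit n Hn). pose proof (cf_frac_bounds _ Hz n). lra. }
  assert (H43 : forall n, (N <= n)%nat -> 4/3 < cf_complete z n).
  { intros n Hn. rewrite Hstep. pose proof (Hdigit n Hn). pose proof (H3 (S n) ltac:(lia)).
    pose proof (cf_complete_S_gt1 _ Hz n).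
    enough (/ 3 < / cf_complete z (S n)) by lra. apply Rinv_lt_contravar; lra. }
  assert (Hhi : forall n, (N <= n)%nat -> cf_complete z n < 11/4).
  { intros n Hn. rewrite Hstep. pose proof (Hdigit n Hn). pose proof (H43 (S n) ltac:(lia)).
    enough (/ cf_complete z (S n) < / (4/3)) by lra. apply Rinv_lt_contravar; lra. }
  intros n Hn. split; [|now apply Hhi].
  rewrite Hstep. pose proof (Hdigit n Hn). pose proof (Hhi (S n) ltac:(lia)).
  pose proof (cf_complete_S_gt1 _ Hz n).
  enough (/ (11/4) < / cf_complete z (S n)) by lra. apply Rinv_lt_contravar; lra.
Qed.

(** * Möbius relations between complete quotients *)

Record mx2 : Set := Mx2 { m11 : Z; m12 : Z; m21 : Z; m22 : Z }.

Definition mx_mul (A B : mx2) : mx2 :=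
  Mx2 (m11 A * m11 B + m12 A * m21 B) (m11 A * m12 B + m12 A * m22 B)
      (m21 A * m11 B + m22 A * m21 B) (m21 A * m12 B + m22 A * m22 B).

Definition mx_adj (A : mx2) : mx2 := Mx2 (m22 A) (- m12 A) (- m21 A) (m11 A).

Definition mx_opp (A : mx2) : mx2 := Mx2 (- m11 A) (- m12 A) (- m21 A) (- m22 A).

Definition mx_det (A : mx2) : Z := (m11 A * m22 A - m12 A * m21 A)%Z.

(* [y = (a x + b) / (c x + d)] with the denominator cleared, so that it composes without
   side conditions. *)
Definition mx_rel (A : mx2) (x y : R) : Prop :=
  y * (IZR (m21 A) * x + IZR (m22 A)) = IZR (m11 A) * x + IZR (m12 A).

Lemma mx_rel_mul (A B : mx2) (x y z : R) :
  mx_rel A x y -> mx_rel B y z -> mx_rel (mx_mul B A) x z.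
Proof.
  destruct A as [a b c d], B as [a' b' c' d']. unfold mx_rel, mx_mul; simpl.
  intros HA HB. rewrite !plus_IZR, !mult_IZR.
  set (D := IZR c * x + IZR d) in HA.
  assert (Hid : z * ((IZR c' * IZR a + IZR d' * IZR c) * x + (IZR c' * IZR b + IZR d' * IZR d))
                - ((IZR a' * IZR a + IZR b' * IZR c) * x + (IZR a' * IZR b + IZR b' * IZR d))
              = (IZR a' - z * IZR c') * (y * D - (IZR a * x + IZR b))
                + D * (z * (IZR c' * y + IZR d') - (IZR a' * y + IZR b'))) by (unfold D; ring).
  rewrite HA, HB in Hid. lra.
Qed.

Lemma mx_rel_adj (A : mx2) (x y : R) : mx_rel A x y -> mx_rel (mx_adj A) y x.
Proof. destruct A as [a b c d]. unfold mx_rel, mx_adj; simpl. rewrite !opp_IZR. lra. Qed.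

Lemma mx_rel_opp (A : mx2) (x y : R) : mx_rel A x y -> mx_rel (mx_opp A) x y.
Proof. destruct A as [a b c d]. unfold mx_rel, mx_opp; simpl. rewrite !opp_IZR. lra. Qed.

Lemma mx_det_mul (A B : mx2) : mx_det (mx_mul A B) = (mx_det A * mx_det B)%Z.
Proof. destruct A, B. unfold mx_det, mx_mul; simpl. ring. Qed.

Lemma mx_det_adj (A : mx2) : mx_det (mx_adj A) = mx_det A.
Proof. destruct A. unfold mx_det, mx_adj; simpl. ring. Qed.

Definition digit_mx (a : Z) : mx2 := Mx2 a 1 1 0.

Lemma mx_det_digit (a : Z) : mx_det (digit_mx a) = (-1)%Z.
Proof. unfold mx_det, digit_mx; simpl. ring. Qed.

Definition shift_mx (a : Z) : mx2 := Mx2 0 1 1 (- a).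

Definition scale_mx (k : Z) : mx2 := Mx2 k 0 0 1.

Lemma mx_det_scale (k : Z) : mx_det (scale_mx k) = k.
Proof. unfold mx_det, scale_mx; cbn [m11 m12 m21 m22]. ring. Qed.

Lemma mx_rel_scale (k : Z) (x : R) : mx_rel (scale_mx k) x (IZR k * x).
Proof. unfold mx_rel, scale_mx; cbn [m11 m12 m21 m22]. ring. Qed.

Definition mx_approx (z : R) (A : mx2) : Prop :=
  (0 <= m22 A <= m21 A)%Z /\
  Rabs (IZR (m11 A) - z * IZR (m21 A)) * IZR (m21 A) <= 1 /\
  Rabs (IZR (m12 A) - z * IZR (m22 A)) * IZR (m21 A) <= 1.

(* If [z = (p x + p')/(q x + q')] with [p q' - p' q = ±1], then [(p - z q)(q x + q') = ±1] and
   [(p' - z q')(q x + q') = ∓x]. *)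
Lemma mx_rel_approx (A : mx2) (x z : R) :
  1 < x -> (1 <= m21 A)%Z -> (0 <= m22 A)%Z -> mx_det A = 1%Z \/ mx_det A = (-1)%Z ->
  mx_rel A x z ->
  Rabs (IZR (m11 A) - z * IZR (m21 A)) * IZR (m21 A) <= 1 /\
  Rabs (IZR (m12 A) - z * IZR (m22 A)) * IZR (m21 A) <= 1.
Proof.
  destruct A as [p p' q q']. unfold mx_rel, mx_det; cbn [m11 m12 m21 m22].
  intros Hx Hq Hq' Hdet Hrel.
  assert (Hd : Rabs (IZR p * IZR q' - IZR p' * IZR q) = 1).
  { rewrite <- !mult_IZR, <- minus_IZR, <- abs_IZR.
    destruct Hdet as [-> | ->]; reflexivity. }
  apply IZR_le in Hq, Hq'.
  set (D := IZR q * x + IZR q') in *.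
  assert (HqD : IZR q <= D) by (unfold D; nra).
  set (e := IZR p - z * IZR q). set (e' := IZR p' - z * IZR q').
  assert (He : e * D = IZR p * IZR q' - IZR p' * IZR q).
  { assert (Hid : e * D - (IZR p * IZR q' - IZR p' * IZR q)
                  = - IZR q * (z * D - (IZR p * x + IZR p'))) by (unfold e, D; ring).
    rewrite Hrel in Hid. lra. }
  assert (He' : e' * D = - x * (IZR p * IZR q' - IZR p' * IZR q)).
  { assert (Hid : e' * D + x * (IZR p * IZR q' - IZR p' * IZR q)
                  = IZR q' * (IZR p * x + IZR p' - z * D)) by (unfold e', D; ring).
    rewrite Hrel in Hid. lra. }
  assert (HeD : Rabs e * D = 1) by (rewrite <- Hd, <- He, Rabs_mult, (Rabs_pos_eq D); lra).
  assert (He'D : Rabs e' * D = x).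
  { rewrite <- (Rabs_pos_eq D), <- Rabs_mult, He', Rabs_mult, Rabs_Ropp, Hd, Rabs_pos_eq; lra. }
  pose proof (Rabs_pos e). pose proof (Rabs_pos e').
  split; [nra|].
  apply Rmult_le_reg_r with x; [lra|].
  assert (Rabs e' * (IZR q * x) <= Rabs e' * D) by (apply Rmult_le_compat_l; unfold D; lra).
  nra.
Qed.

Fixpoint cf_mat (z : R) (n : nat) : mx2 :=
  match n with
  | O => Mx2 1 0 0 1
  | S n => mx_mul (cf_mat z n) (digit_mx (cf_term z n))
  end.

Section Convergents.

Variable z : R.

Hypothesis Hz : eventually_1_2 z.

Lemma cf_digit_rel (n : nat) :
  mx_rel (digit_mx (cf_term z n)) (cf_complete z (S n)) (cf_complete z n).
Proof.
  pose proof (cf_complete_S_mul z Hz n). unfold mx_rel, digit_mx; cbn [m11 m12 m21 m22]. nra.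
Qed.

Lemma cf_shift_rel (n : nat) :
  mx_rel (shift_mx (cf_term z n)) (cf_complete z n) (cf_complete z (S n)).
Proof.
  pose proof (cf_complete_S_mul z Hz n). unfold mx_rel, shift_mx; cbn [m11 m12 m21 m22].
  rewrite opp_IZR. nra.
Qed.

Lemma cf_mat_rel (n : nat) : mx_rel (cf_mat z n) (cf_complete z n) z.
Proof.
  induction n as [|n IH]; [unfold mx_rel; simpl; ring|].
  exact (mx_rel_mul _ _ _ _ _ (cf_digit_rel n) IH).
Qed.

Lemma cf_mat_det (n : nat) : mx_det (cf_mat z n) = 1%Z \/ mx_det (cf_mat z n) = (-1)%Z.
Proof.
  induction n as [|n IH]; [now left|].
  cbn [cf_mat]. rewrite mx_det_mul, mx_det_digit. lia.
Qed.

Lemma cf_mat_den_S (n : nat) :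
  m21 (cf_mat z (S n)) = (m21 (cf_mat z n) * cf_term z n + m22 (cf_mat z n))%Z /\
  m22 (cf_mat z (S n)) = m21 (cf_mat z n).
Proof. cbn [cf_mat]. unfold mx_mul, digit_mx; cbn [m11 m12 m21 m22]. split; ring. Qed.

Lemma cf_mat_den_bounds (n : nat) :
  (1 <= n)%nat -> (1 <= m21 (cf_mat z n) /\ 0 <= m22 (cf_mat z n) <= m21 (cf_mat z n))%Z.
Proof.
  intros Hn. destruct n as [|n]; [lia|]. clear Hn.
  induction n as [|n IH]; [simpl; lia|].
  pose proof (cf_term_ge1 z Hz (S n) ltac:(lia)).
  destruct (cf_mat_den_S (S n)) as [-> ->]. nia.
Qed.

Lemma cf_mat_den_ge (n : nat) : (2 <= n)%nat -> (Z.of_nat n - 1 <= m21 (cf_mat z n))%Z.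
Proof.
  intros Hn. induction n as [|n IH]; [lia|].
  pose proof (cf_term_ge1 z Hz n ltac:(lia)).
  destruct (cf_mat_den_S n) as [-> _].
  destruct (Nat.eq_dec n 1) as [->|Hn1].
  { destruct (cf_mat_den_S 0) as [-> ->].
    change (cf_mat z 0) with (Mx2 1 0 0 1). cbn [m21 m22]. lia. }
  pose proof (IH ltac:(lia)). destruct (cf_mat_den_S (n - 1)) as [_ Hm22].
  replace (S (n - 1)) with n in Hm22 by lia.
  pose proof (cf_mat_den_bounds (n - 1) ltac:(lia)). nia.
Qed.

Lemma cf_mat_den_le3 (n : nat) : (1 <= n)%nat -> (cf_term z n <= 2)%Z ->
  (m21 (cf_mat z (S n)) <= 3 * m22 (cf_mat z (S n)))%Z.
Proof.
  intros Hn Ha. pose proof (cf_mat_den_bounds n Hn).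
  destruct (cf_mat_den_S n) as [-> ->]. nia.
Qed.

Lemma cf_mat_approx (n : nat) : (1 <= n)%nat -> mx_approx z (cf_mat z n).
Proof.
  intros Hn. destruct n as [|n]; [lia|].
  pose proof (cf_mat_den_bounds (S n) Hn).
  split; [lia|]. apply (mx_rel_approx _ (cf_complete z (S n))); try lia.
  - apply cf_complete_S_gt1, Hz.
  - apply cf_mat_det.
  - apply cf_mat_rel.
Qed.

End Convergents.

(** * The digit transducer *)

(* [at_lo a b] and [at_hi a b] are the values of [a x + b] at [x = 15/11] and [x = 11/4],
   scaled by [11] and [4]. *)
Definition at_lo (a b : Z) : Z := (15 * a + 11 * b)%Z.

Definition at_hi (a b : Z) : Z := (11 * a + 4 * b)%Z.

Lemma affine_interp (a b : Z) (x : R) :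
  61 * (IZR a * x + IZR b) = IZR (at_lo a b) * (11 - 4 * x) + IZR (at_hi a b) * (11 * x - 15).
Proof. unfold at_lo, at_hi. rewrite !plus_IZR, !mult_IZR. ring. Qed.

Lemma affine_nonneg (a b : Z) (x : R) : 15/11 < x < 11/4 ->
  (0 <= at_lo a b)%Z -> (0 <= at_hi a b)%Z -> 0 <= IZR a * x + IZR b.
Proof.
  intros Hx Hlo Hhi. apply IZR_le in Hlo, Hhi. pose proof (affine_interp a b x).
  assert (0 <= IZR (at_lo a b) * (11 - 4 * x)) by (apply Rmult_le_pos; lra).
  assert (0 <= IZR (at_hi a b) * (11 * x - 15)) by (apply Rmult_le_pos; lra).
  lra.
Qed.

Lemma affine_pos (a b : Z) (x : R) : 15/11 < x < 11/4 ->
  (0 < at_lo a b)%Z -> (0 <= at_hi a b)%Z -> 0 < IZR a * x + IZR b.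
Proof.
  intros Hx Hlo Hhi. apply IZR_lt in Hlo. apply IZR_le in Hhi. pose proof (affine_interp a b x).
  assert (0 < IZR (at_lo a b) * (11 - 4 * x)) by (apply Rmult_lt_0_compat; lra).
  assert (0 <= IZR (at_hi a b) * (11 * x - 15)) by (apply Rmult_le_pos; lra).
  lra.
Qed.

Definition emit_digit (A : mx2) : Z := (at_lo (m11 A) (m12 A) / at_lo (m21 A) (m22 A))%Z.

Definition emits (A : mx2) : bool :=
  let k := emit_digit A in
  forallb (fun ev : Z -> Z -> Z =>
             let num := ev (m11 A) (m12 A) in
             let den := ev (m21 A) (m22 A) in
             (0 <? den) && (k * den <=? num) && (num <=? (k + 1) * den))%Z
          [at_lo; at_hi].

Lemma emits_bounds (A : mx2) (x y : R) : emits A = true -> 15/11 < x < 11/4 ->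
  mx_rel A x y -> IZR (emit_digit A) <= y <= IZR (emit_digit A) + 1.
Proof.
  destruct A as [a b c d]. unfold emits, mx_rel. cbn [forallb m11 m12 m21 m22].
  set (k := emit_digit _). rewrite andb_true_r. intros Hem Hx Hrel.
  repeat rewrite andb_true_iff in Hem. rewrite !Z.ltb_lt, !Z.leb_le in Hem.
  destruct Hem as [[[Hlo_pos Hlo1] Hlo2] [[Hhi_pos Hhi1] Hhi2]].
  assert (Hden : 0 < IZR c * x + IZR d) by (apply affine_pos; [exact Hx | lia | lia]).
  assert (Hge : 0 <= IZR (a - k * c) * x + IZR (b - k * d))
    by (apply affine_nonneg; [exact Hx | unfold at_lo, at_hi in *; lia ..]).
  assert (Hle : 0 <= IZR ((k + 1) * c - a) * x + IZR ((k + 1) * d - b))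
    by (apply affine_nonneg; [exact Hx | unfold at_lo, at_hi in *; lia ..]).
  rewrite !minus_IZR, !mult_IZR in Hge. rewrite !minus_IZR, !mult_IZR, plus_IZR in Hle.
  split; nra.
Qed.

Definition normalize (A : mx2) : mx2 :=
  if (at_lo (m21 A) (m22 A) <? 0)%Z then mx_opp A else A.

Lemma mx_rel_normalize (A : mx2) (x y : R) : mx_rel A x y -> mx_rel (normalize A) x y.
Proof. unfold normalize. destruct (_ <? _)%Z; [apply mx_rel_opp | exact (fun H => H)]. Qed.

(* [y = A x] with [x] a complete quotient of a number with digits 1, 2.  Either [A] maps all of
   [(15/11, 11/4)] into one [[k, k+1]], which fixes the next digit [k] of [y], or the next digit
   1 or 2 of [x] is absorbed into [A].  [refute_12 fuel A] holds when every branch emits a digit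
   other than 1, 2 within [fuel] steps. *)
Fixpoint refute_12 (fuel : nat) (A : mx2) : bool :=
  match fuel with
  | O => false
  | S fuel =>
      let A := normalize A in
      if emits A then
        let k := emit_digit A in
        if (k =? 1) || (k =? 2) then refute_12 fuel (mx_mul (shift_mx k) A) else true
      else refute_12 fuel (mx_mul A (digit_mx 1)) && refute_12 fuel (mx_mul A (digit_mx 2))
  end%Z.

Section Transducer.

Variables (xi eta : R) (N1 N2 : nat).

Hypothesis Hxi : tail_12 xi N1.

Hypothesis Heta : tail_12 eta N2.

Lemma refute_12_sound (fuel : nat) (A : mx2) (n m : nat) :
  (N1 <= n)%nat -> (N2 <= m)%nat -> refute_12 fuel A = true ->
  ~ mx_rel A (cf_complete xi n) (cf_complete eta m).
Proof.
  assert (Hxi' : eventually_1_2 xi) by (exists N1; exact Hxi).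
  assert (Heta' : eventually_1_2 eta) by (exists N2; exact Heta).
  revert A n m. induction fuel as [|fuel IH]; intros A n m Hn Hm Href Hrel; [discriminate|].
  cbn [refute_12] in Href. apply mx_rel_normalize in Hrel.
  set (B := normalize A) in *. clearbody B.
  destruct (emits B) eqn:Hem.
  - pose proof (emits_bounds B _ _ Hem (tail_12_bounds xi N1 Hxi n Hn) Hrel) as Hy.
    apply (cf_term_eq eta Heta') in Hy.
    assert (Hd : ((cf_term eta m =? 1) || (cf_term eta m =? 2))%Z = true)
      by (destruct (Heta m Hm) as [-> | ->]; reflexivity).
    rewrite <- Hy, Hd in Href.
    exact (IH _ n (S m) Hn ltac:(lia) Href (mx_rel_mul _ _ _ _ _ Hrel (cf_shift_rel eta Heta' m))).
  - apply andb_true_iff in Href as [Href1 Href2].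
    pose proof (mx_rel_mul _ _ _ _ _ (cf_digit_rel xi Hxi' n) Hrel) as Hrel'.
    destruct (Hxi n Hn) as [Hd|Hd]; rewrite Hd in Hrel'.
    + exact (IH _ (S n) m ltac:(lia) Hm Href1 Hrel').
    + exact (IH _ (S n) m ltac:(lia) Hm Href2 Hrel').
Qed.

End Transducer.

(** * The prime 67 *)

Definition mx_small (k : Z) (A : mx2) : Prop :=
  (8 * Z.abs (m11 A) <= k + 64 /\ 8 * Z.abs (m12 A) <= k + 64 /\
   8 * Z.abs (m21 A) <= 3 * k + 64 /\ 8 * Z.abs (m22 A) <= 3 * k + 64)%Z.

Lemma Z_crossing (f : nat -> Z) (J K : nat) (t : Z) :
  (f J <= t)%Z -> (t < f (J + K)%nat)%Z -> exists m, (J <= m)%nat /\ (f m <= t < f (S m))%Z.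
Proof.
  intros HJ. induction K as [|K IH]; intros HK; [rewrite Nat.add_0_r in HK; lia|].
  destruct (Z_lt_le_dec t (f (J + K)%nat)) as [Hlt|Hle]; [now apply IH|].
  exists (J + K)%nat. rewrite <- Nat.add_succ_r. split; [lia | auto].
Qed.

Lemma cross_entry_small (k a b A B K : Z) (xi c1 c2 : R) :
  (0 < k)%Z -> (0 <= b)%Z -> (0 <= B)%Z ->
  Rabs (IZR a - xi * IZR b) * IZR B <= c1 ->
  Rabs (IZR A - IZR k * xi * IZR B) * IZR b <= c2 ->
  8 * (IZR k * c1 + c2) <= IZR K ->
  (8 * Z.abs (k * a * B - A * b) <= K)%Z.
Proof.
  intros Hk Hb HB H1 H2 HK. apply IZR_lt in Hk. apply IZR_le in Hb, HB.
  apply le_IZR. rewrite mult_IZR, abs_IZR, minus_IZR, !mult_IZR.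
  replace (IZR k * IZR a * IZR B - IZR A * IZR b)
    with (IZR k * ((IZR a - xi * IZR b) * IZR B) - (IZR A - IZR k * xi * IZR B) * IZR b)
    by ring.
  unfold Rminus at 1. pose proof (Rabs_triang (IZR k * ((IZR a - xi * IZR b) * IZR B))
                                   (- ((IZR A - IZR k * xi * IZR B) * IZR b))) as Htri.
  rewrite Rabs_Ropp, !Rabs_mult, (Rabs_pos_eq (IZR k)), (Rabs_pos_eq (IZR B)),
    (Rabs_pos_eq (IZR b)) in Htri by lra.
  nra.
Qed.

Lemma mx_approx_cross_small (k : Z) (xi : R) (C D : mx2) :
  (0 < k)%Z -> mx_approx xi C -> mx_approx (IZR k * xi) D ->
  (m21 D <= 3 * m22 D)%Z -> (8 * m22 D <= m21 C < 8 * m21 D)%Z ->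
  mx_small k (mx_mul (mx_adj D) (mx_mul (scale_mx k) C)).
Proof.
  destruct C as [p p' q q'], D as [P P' Q Q'].
  unfold mx_approx, mx_small; cbn [m11 m12 m21 m22 mx_adj mx_mul scale_mx].
  intros Hk [Hq [He He']] [HQ [HE HE']] HQ3 [Hlo Hhi].
  apply IZR_le in HQ3, Hlo. apply IZR_lt in Hhi. rewrite !mult_IZR in HQ3, Hlo, Hhi.
  assert (0 <= IZR q' <= IZR q) by (split; apply IZR_le; lia).
  assert (0 <= IZR Q') by (apply IZR_le; lia).
  pose proof (Rabs_pos (IZR p - xi * IZR q)). pose proof (Rabs_pos (IZR p' - xi * IZR q')).
  pose proof (Rabs_pos (IZR P - IZR k * xi * IZR Q)).
  pose proof (Rabs_pos (IZR P' - IZR k * xi * IZR Q')).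
  assert (H64 : forall c, 8 * (IZR k * (c / 8) + 8) = IZR k * c + IZR 64) by (intros; lra).
  repeat split.
  - replace (_ + _)%Z with (k * p * Q' - P' * q)%Z by ring.
    apply (cross_entry_small _ _ _ _ _ _ xi (1/8) 8); try lia; try nra;
      rewrite H64, plus_IZR; lra.
  - replace (_ + _)%Z with (k * p' * Q' - P' * q')%Z by ring.
    apply (cross_entry_small _ _ _ _ _ _ xi (1/8) 8); try lia; try nra;
      rewrite H64, plus_IZR; lra.
  - replace (_ + _)%Z with (- (k * p * Q - P * q))%Z by ring. rewrite Z.abs_opp.
    apply (cross_entry_small _ _ _ _ _ _ xi (3/8) 8); try lia; try nra;
      rewrite H64, plus_IZR, mult_IZR; lra.
  - replace (_ + _)%Z with (- (k * p' * Q - P * q'))%Z by ring. rewrite Z.abs_opp.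
    apply (cross_entry_small _ _ _ _ _ _ xi (3/8) 8); try lia; try nra;
      rewrite H64, plus_IZR, mult_IZR; lra.
Qed.

(* [m] is chosen so that the convergent denominators of [k xi] bracket those of [xi]:
   [8 Q_(m-1) <= q_n < 8 Q_m]. *)
Lemma tails_12_small_relation (k : Z) (xi : R) (N1 N2 : nat) :
  (0 < k)%Z -> tail_12 xi N1 -> tail_12 (IZR k * xi) N2 ->
  exists n m A, (N1 <= n)%nat /\ (N2 <= m)%nat /\
    (mx_det A = k \/ mx_det A = (- k)%Z) /\ mx_small k A /\
    mx_rel A (cf_complete xi n) (cf_complete (IZR k * xi) m).
Proof.
  set (eta := IZR k * xi). intros Hk Hxi Heta.
  assert (Hxi' : eventually_1_2 xi) by (exists N1; exact Hxi).
  assert (Heta' : eventually_1_2 eta) by (exists N2; exact Heta).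
  set (J := Nat.max N2 2).
  set (f := fun j => (8 * m21 (cf_mat eta j))%Z).
  set (n := (Nat.max N1 2 + Z.to_nat (f J) + 1)%nat).
  set (q := m21 (cf_mat xi n)).
  assert (HqJ : (f J <= q)%Z).
  { pose proof (cf_mat_den_ge xi Hxi' n ltac:(lia)).
    pose proof (cf_mat_den_bounds eta Heta' J ltac:(lia)). unfold f in *. lia. }
  destruct (Z_crossing f J (Z.to_nat q) q HqJ) as [m' [Hm' [Hlo Hhi]]].
  { pose proof (cf_mat_den_ge eta Heta' (J + Z.to_nat q) ltac:(lia)). unfold f. lia. }
  set (m := S m'). unfold f in Hlo, Hhi.
  destruct (cf_mat_den_S eta m') as [_ Hm22]. fold m in Hm22. rewrite <- Hm22 in Hlo.
  exists n, m, (mx_mul (mx_adj (cf_mat eta m)) (mx_mul (scale_mx k) (cf_mat xi n))).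
  split; [lia|]. split; [lia|]. split; [|split].
  - rewrite !mx_det_mul, mx_det_adj, mx_det_scale.
    destruct (cf_mat_det xi n) as [-> | ->], (cf_mat_det eta m) as [-> | ->]; lia.
  - apply (mx_approx_cross_small k xi); try lia.
    + apply (cf_mat_approx xi Hxi'); lia.
    + apply (cf_mat_approx eta Heta'); lia.
    + apply cf_mat_den_le3; [exact Heta' | lia |].
      destruct (Heta m' ltac:(lia)) as [-> | ->]; lia.
    + unfold m, q in *. lia.
  - apply (mx_rel_mul _ _ _ eta).
    + apply (mx_rel_mul _ _ _ xi); [apply (cf_mat_rel xi Hxi') | apply mx_rel_scale].
    + apply mx_rel_adj, (cf_mat_rel eta Heta').
Qed.

Fixpoint Zrange_from (lo : Z) (n : nat) : list Z :=
  match n with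
  | O => []
  | S n => lo :: Zrange_from (lo + 1) n
  end.

Definition Zrange (lo hi : Z) : list Z := Zrange_from lo (Z.to_nat (hi - lo + 1)).

Lemma in_Zrange (lo hi z : Z) : In z (Zrange lo hi) <-> (lo <= z <= hi)%Z.
Proof.
  unfold Zrange.
  enough (H : forall n lo, In z (Zrange_from lo n) <-> (lo <= z < lo + Z.of_nat n)%Z)
    by (rewrite H; lia).
  clear lo hi. induction n as [|n IH]; intros lo; cbn [Zrange_from In]; [lia|].
  rewrite IH. lia.
Qed.

Lemma forallb_Zrange (f : Z -> bool) (lo hi z : Z) :
  forallb f (Zrange lo hi) = true -> (lo <= z <= hi)%Z -> f z = true.
Proof. rewrite forallb_forall. intros H Hz. apply H, in_Zrange, Hz. Qed.

Definition det_solutions (s a b c B : Z) : list Z :=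
  if (a =? 0)%Z then (if (- (b * c) =? s)%Z then Zrange (- B) B else [])
  else let d := ((s + b * c) / a)%Z in
       if ((s + b * c) mod a =? 0)%Z && (Z.abs d <=? B)%Z then [d] else [].

Lemma in_det_solutions (s a b c d B : Z) :
  (a * d - b * c = s)%Z -> (Z.abs d <= B)%Z -> In d (det_solutions s a b c B).
Proof.
  intros Hdet HB. unfold det_solutions. destruct (Z.eqb_spec a 0) as [->|Ha].
  - replace (- (b * c) =? s)%Z with true by (symmetry; apply Z.eqb_eq; lia).
    apply in_Zrange. lia.
  - replace (s + b * c)%Z with (d * a)%Z by lia.
    rewrite Z.mod_mul, Z.div_mul by exact Ha.
    replace (Z.abs d <=? B)%Z with true by (symmetry; apply Z.leb_le; lia).
    now left.
Qed.

Definition small_refuted (fuel : nat) (k : Z) : bool :=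
  let B1 := ((k + 64) / 8)%Z in
  let B2 := ((3 * k + 64) / 8)%Z in
  forallb (fun a => forallb (fun b => forallb (fun c => forallb (fun s =>
    forallb (fun d => refute_12 fuel (Mx2 a b c d)) (det_solutions s a b c B2))
    [k; (- k)%Z]) (Zrange (- B2) B2)) (Zrange (- B1) B1)) (Zrange (- B1) B1).

Lemma small_refuted_spec (fuel : nat) (k : Z) (A : mx2) :
  small_refuted fuel k = true -> mx_small k A -> mx_det A = k \/ mx_det A = (- k)%Z ->
  refute_12 fuel A = true.
Proof.
  destruct A as [a b c d]. unfold small_refuted, mx_small, mx_det; cbn [m11 m12 m21 m22].
  intros Hcheck [Ha [Hb [Hc Hd]]] Hdet.
  assert (Hbound : forall x K, (8 * Z.abs x <= K)%Z -> (- (K / 8) <= x <= K / 8)%Z).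
  { intros x K Hx. assert (Z.abs x <= K / 8)%Z by (apply Z.div_le_lower_bound; lia). lia. }
  apply (forallb_Zrange _ _ _ a), (forallb_Zrange _ _ _ b), (forallb_Zrange _ _ _ c)
    in Hcheck; try (apply Hbound; assumption).
  rewrite forallb_forall in Hcheck.
  specialize (Hcheck (a * d - b * c)%Z ltac:(destruct Hdet as [-> | ->]; cbn; tauto)).
  rewrite forallb_forall in Hcheck. apply Hcheck.
  apply in_det_solutions; [reflexivity | pose proof (Hbound _ _ Hd); lia].
Qed.

Lemma small_refuted_67 : small_refuted 40 67 = true.
Proof. vm_compute. reflexivity. Qed.

Lemma no_tails_12_67 (xi : R) : eventually_1_2 xi -> ~ eventually_1_2 (IZR 67 * xi).
Proof.
  intros [N1 Hxi] [N2 Heta].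
  destruct (tails_12_small_relation 67 xi N1 N2 ltac:(lia) Hxi Heta)
    as [n [m [A [Hn [Hm [Hdet [Hsmall Hrel]]]]]]].
  apply (refute_12_sound xi _ N1 N2 Hxi Heta 40 A n m Hn Hm); [|exact Hrel].
  exact (small_refuted_spec 40 67 A small_refuted_67 Hsmall Hdet).
Qed.

(** * Quadratic surds with periods of 1s and 2s *)

Definition surd (D : Z) (s : Z * Z) : R := (IZR (fst s) + sqrt (IZR D)) / IZR (snd s).

(* Exact because [sqrt D] is irrational: for [Q > 0], [(P + sqrt D) / Q] and
   [(P + Z.sqrt D) / Q] have the same floor; symmetrically for [Q < 0]. *)
Definition surd_floor (D : Z) (s : Z * Z) : Z :=
  let (P, Q) := s in
  if (0 <? Q)%Z then ((P + Z.sqrt D) / Q)%Z else ((- P - Z.sqrt D - 1) / - Q)%Z.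

Definition surd_step (D : Z) (s : Z * Z) : Z * Z :=
  let (P, Q) := s in
  let P' := (surd_floor D s * Q - P)%Z in (P', ((D - P' * P') / Q)%Z).

Definition surd_wf (D : Z) (s : Z * Z) : Prop :=
  snd s <> 0%Z /\ (snd s | D - fst s * fst s)%Z.

Section QuadraticSurd.

Variable D : Z.
Hypothesis HD : (0 < D)%Z.
Hypothesis HDsq : (Z.sqrt D * Z.sqrt D <> D)%Z.

Lemma square_neq_D (t : Z) : (t * t <> D)%Z.
Proof.
  intros Ht. apply HDsq. rewrite <- Ht.
  replace (t * t)%Z with (Z.abs t * Z.abs t)%Z by lia.
  rewrite Z.sqrt_square; lia.
Qed.

Lemma sqrt_D_sqr : sqrt (IZR D) * sqrt (IZR D) = IZR D.
Proof. apply sqrt_sqrt, IZR_le. lia. Qed.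

Lemma sqrt_D_neq_IZR (t : Z) : sqrt (IZR D) <> IZR t.
Proof.
  intros Ht. apply (square_neq_D t), eq_IZR.
  rewrite mult_IZR, <- Ht. exact sqrt_D_sqr.
Qed.

Lemma sqrt_D_bounds : IZR (Z.sqrt D) < sqrt (IZR D) < IZR (Z.sqrt D) + 1.
Proof.
  pose proof (Z.sqrt_spec D ltac:(lia)) as [Hlo Hhi].
  pose proof (Z.sqrt_nonneg D). pose proof (sqrt_pos (IZR D)). pose proof sqrt_D_sqr.
  set (r := Z.sqrt D) in *.
  apply IZR_le in Hlo. apply IZR_lt in Hhi. rewrite mult_IZR in Hlo.
  rewrite mult_IZR, succ_IZR in Hhi. assert (0 <= IZR r) by (apply IZR_le; lia).
  split; [|nra].
  destruct (Rle_lt_dec (sqrt (IZR D)) (IZR r)) as [Hle|Hlt]; [|exact Hlt].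
  destruct (Rle_lt_or_eq _ _ Hle) as [Hlt|Heq]; [nra | now destruct (sqrt_D_neq_IZR r)].
Qed.

Lemma surd_floor_spec (s : Z * Z) : snd s <> 0%Z -> rfloor (surd D s) = surd_floor D s.
Proof.
  destruct s as [P Q]. unfold surd, surd_floor; cbn [fst snd]. intros HQ.
  pose proof sqrt_D_bounds as Hr.
  destruct (Z.ltb_spec 0 Q) as [Hpos|Hneg].
  - apply rfloor_div; [exact Hpos|]. rewrite plus_IZR. lra.
  - replace ((IZR P + sqrt (IZR D)) / IZR Q) with ((- IZR P - sqrt (IZR D)) / IZR (- Q))
      by (rewrite opp_IZR; field; apply not_0_IZR, HQ).
    apply rfloor_div; [lia|]. rewrite !minus_IZR, opp_IZR. lra.
Qed.

Lemma surd_step_spec (s : Z * Z) : surd_wf D s ->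
  surd_wf D (surd_step D s) /\ surd D (surd_step D s) = / (surd D s - IZR (surd_floor D s)).
Proof.
  destruct s as [P Q]. intros [HQ [t Ht]]. cbn [fst snd] in HQ, Ht.
  unfold surd_step. set (a := surd_floor D (P, Q)). set (P' := (a * Q - P)%Z).
  set (Q' := (t + 2 * a * P - a * a * Q)%Z).
  assert (HPQ : (D - P' * P' = Q' * Q)%Z).
  { unfold P', Q'. replace D with (t * Q + P * P)%Z by lia. ring. }
  rewrite HPQ, Z.div_mul by exact HQ.
  assert (HQ' : Q' <> 0%Z) by (intros H0; apply (square_neq_D P'); lia).
  split; [split; [exact HQ' | exists Q; cbn; lia]|].
  unfold surd; cbn [fst snd].
  assert (Hr : sqrt (IZR D) - IZR P' <> 0) by (pose proof (sqrt_D_neq_IZR P'); lra).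
  apply not_0_IZR in HQ, HQ'.
  assert (HPQ' : IZR D - IZR P' * IZR P' = IZR Q' * IZR Q)
    by (rewrite <- !mult_IZR, <- minus_IZR; f_equal; exact HPQ).
  replace ((IZR P + sqrt (IZR D)) / IZR Q - IZR a) with ((sqrt (IZR D) - IZR P') / IZR Q)
    by (unfold P'; rewrite minus_IZR, mult_IZR; field; exact HQ).
  rewrite Rinv_div. field_simplify_eq; [|split; assumption].
  pose proof sqrt_D_sqr. nra.
Qed.

Lemma surd_iter_spec (s : Z * Z) (n : nat) : surd_wf D s ->
  surd_wf D (Nat.iter n (surd_step D) s) /\
  cf_complete (surd D s) n = surd D (Nat.iter n (surd_step D) s).
Proof.
  intros Hs. induction n as [|n [Hwf Hval]]; [split; [exact Hs | reflexivity]|].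
  rewrite Nat.iter_succ. destruct (surd_step_spec _ Hwf) as [Hwf' Hval'].
  split; [exact Hwf'|].
  rewrite cf_complete_S, Hval', Hval. unfold cf_term. rewrite Hval.
  rewrite surd_floor_spec; [reflexivity | apply Hwf].
Qed.

End QuadraticSurd.

Fixpoint digits_12 (D : Z) (L : nat) (s : Z * Z) : bool :=
  match L with
  | O => true
  | S L => let a := surd_floor D s in
           ((a =? 1) || (a =? 2))%Z && digits_12 D L (surd_step D s)
  end.

Lemma digits_12_spec (D : Z) (L : nat) (s : Z * Z) : digits_12 D L s = true ->
  forall j, (j < L)%nat ->
  let a := surd_floor D (Nat.iter j (surd_step D) s) in a = 1%Z \/ a = 2%Z.
Proof.
  revert s. induction L as [|L IH]; intros s Hs j Hj; [lia|].
  cbn [digits_12] in Hs. apply andb_true_iff in Hs as [Ha Hs].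
  destruct j as [|j].
  - apply orb_true_iff in Ha as [Ha|Ha]; apply Z.eqb_eq in Ha; [left | right]; exact Ha.
  - rewrite Nat.iter_succ_r. apply IH; [exact Hs | lia].
Qed.

Lemma iter_period {A : Type} (f : A -> A) (L k : nat) (s : A) :
  Nat.iter L f s = s -> Nat.iter (k * L) f s = s.
Proof.
  intros Hs. induction k as [|k IH]; [reflexivity|].
  rewrite Nat.mul_succ_l, Nat.add_comm, Nat.iter_add, IH. exact Hs.
Qed.

Definition surd_cert (D P Q : Z) (N L : nat) : bool :=
  (0 <? D)%Z && negb (Z.sqrt D * Z.sqrt D =? D)%Z && negb (Q =? 0)%Z &&
  ((D - P * P) mod Q =? 0)%Z && (0 <? L)%nat &&
  let s := Nat.iter N (surd_step D) (P, Q) in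
  let s' := Nat.iter L (surd_step D) s in
  digits_12 D L s && (fst s' =? fst s)%Z && (snd s' =? snd s)%Z.

Lemma surd_cert_sound (D P Q : Z) (N L : nat) :
  surd_cert D P Q N L = true -> eventually_1_2 (surd D (P, Q)).
Proof.
  unfold surd_cert. cbv zeta. repeat rewrite andb_true_iff.
  intros [[[[[HD HDsq] HQ] Hdiv] HL] [[Hdig Hfst] Hsnd]].
  apply Z.ltb_lt in HD. apply negb_true_iff, Z.eqb_neq in HDsq, HQ.
  apply Z.eqb_eq, Z.mod_divide in Hdiv; [|exact HQ]. apply Nat.ltb_lt in HL.
  apply Z.eqb_eq in Hfst, Hsnd.
  set (s := Nat.iter N (surd_step D) (P, Q)) in *.
  assert (Hper : Nat.iter L (surd_step D) s = s)
    by (destruct (Nat.iter L (surd_step D) s), s; cbn in *; congruence).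
  exists N. intros n Hn.
  destruct (surd_iter_spec D HD HDsq (P, Q) n (conj HQ Hdiv)) as [Hwf Hval].
  unfold cf_term. rewrite Hval, (surd_floor_spec D HD HDsq _ (proj1 Hwf)).
  replace n with ((n - N) mod L + (n - N) / L * L + N)%nat
    by (pose proof (Nat.div_mod_eq (n - N) L); lia).
  rewrite !Nat.iter_add. fold s. rewrite iter_period by exact Hper.
  apply (digits_12_spec D L s Hdig). apply Nat.mod_upper_bound. lia.
Qed.

Lemma surd_scale (k D P Q : Z) : (0 <= k)%Z -> (0 <= D)%Z ->
  IZR k * surd D (P, Q) = surd (k * k * D)%Z ((k * P)%Z, Q).
Proof.
  intros Hk HD. unfold surd; cbn [fst snd].
  rewrite !mult_IZR, sqrt_mult_alt, sqrt_square by (try apply Rle_0_sqr; apply IZR_le; lia).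
  unfold Rdiv. ring.
Qed.

(** * Primes below 2000 *)

Definition cert_ok (p : Z) (c : Z * Z * Z * Z * Z * Z * Z) : bool :=
  let '(D, P, Q, N1, L1, N2, L2) := c in
  (0 <? p)%Z && surd_cert D P Q (Z.to_nat N1) (Z.to_nat L1) &&
  surd_cert (p * p * D) (p * P) Q (Z.to_nat N2) (Z.to_nat L2).

Lemma cert_ok_witness (p : Z) (c : Z * Z * Z * Z * Z * Z * Z) : cert_ok p c = true ->
  exists xi, irrational xi /\ eventually_1_2 xi /\ eventually_1_2 (IZR p * xi).
Proof.
  destruct c as [[[[[[D P] Q] N1] L1] N2] L2]. unfold cert_ok.
  rewrite !andb_true_iff. intros [[Hp H1] H2]. apply Z.ltb_lt in Hp.
  assert (HD : (0 < D)%Z)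
    by (unfold surd_cert in H1; rewrite !andb_true_iff, Z.ltb_lt in H1; tauto).
  pose proof (surd_cert_sound _ _ _ _ _ H1) as Hxi.
  exists (surd D (P, Q)). split; [|split]; [now apply eventually_1_2_irrational | exact Hxi |].
  rewrite surd_scale by lia. exact (surd_cert_sound _ _ _ _ _ H2).
Qed.

Definition certificates : list (Z * (Z * Z * Z * Z * Z * Z * Z)) := [
  (2, (12, 2, 4, 0, 2, 0, 2));
  (3, (12, 6, 6, 2, 2, 1, 2));
  (5, (5, 15, 10, 3, 1, 1, 1));
  (7, (8, 36, 28, 4, 1, 2, 1));
  (11, (5, 29, 22, 3, 1, 1, 1));
  (13, (12, 70, 52, 3, 2, 1, 2));
  (17, (221, 221, 170, 4, 4, 1, 4));
  (19, (85, -6457, -4066, 6, 3, 2, 3));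
  (23, (96, 186, 138, 3, 4, 1, 4));
  (29, (260, -708, -406, 4, 5, 2, 5));
  (31, (40, -4430, -2790, 6, 3, 2, 3));
  (37, (12, -1154, -814, 5, 2, 2, 2));
  (41, (40, -3148, -2214, 6, 3, 2, 3));
  (43, (3604, -31422, -19780, 6, 7, 2, 7));
  (47, (672, -8344, -5264, 7, 6, 2, 6));
  (53, (221, 851, 530, 5, 4, 1, 4));
  (59, (85, -1345, -826, 7, 3, 2, 3));
  (61, (260, 850, 610, 4, 5, 1, 5));
  (71, (40, 728, 426, 6, 3, 1, 3));
  (73, (8, 228, 146, 6, 1, 1, 1));
  (79, (40, 746, 474, 5, 3, 1, 3));
  (83, (1517, 25189, 14774, 6, 6, 3, 6));
  (89, (40, -48832, -30794, 8, 3, 2, 3));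
  (97, (12, -7974, -5044, 9, 2, 3, 2));
  (101, (1365, -22795, -14342, 7, 6, 2, 6));
  (103, (19604, 16202, 10300, 5, 7, 1, 7));
  (107, (790325, -1737505, -1019710, 7, 11, 2, 11));
  (109, (55700, -911566, -644408, 6, 9, 2, 9));
  (113, (8104, 67696, 39324, 8, 7, 3, 7));
  (127, (533, -2535, -1778, 4, 5, 2, 5));
  (131, (533, -2617, -1834, 4, 5, 2, 5));
  (137, (8, 884, 548, 8, 1, 2, 1));
  (139, (1517, -11429, -8062, 5, 6, 2, 6));
  (149, (47085, -2285063, -1447982, 8, 8, 2, 8));
  (151, (40, 832, 604, 5, 3, 1, 3));
  (157, (308021, 77389, 56206, 5, 10, 1, 10));
  (163, (43677, 625971, 443034, 7, 8, 4, 8));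
  (167, (64512, -988408, -698728, 6, 10, 2, 10));
  (173, (1517, 47009, 27334, 7, 6, 3, 6));
  (179, (260, -296970, -174346, 9, 5, 4, 5));
  (181, (12, 22872, 14118, 9, 2, 4, 2));
  (191, (5, 20423, 11842, 9, 1, 3, 1));
  (193, (96, -2140, -1544, 6, 4, 2, 4));
  (197, (3973, 610237, 357358, 8, 7, 3, 7));
  (199, (44096, 943208, 552424, 7, 8, 3, 8));
  (211, (260, 3580, 2110, 6, 5, 1, 5));
  (223, (12104, -1095708, -642686, 8, 9, 2, 9));
  (227, (2813, 12197, 8626, 6, 5, 1, 5));
  (229, (3725, 31655, 22442, 6, 7, 2, 7));
  (233, (19604, -63502, -45668, 7, 7, 2, 7));
  (239, (85, 1904573, 1346526, 10, 3, 3, 3));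
  (241, (12, 2040, 1446, 6, 2, 2, 2));
  (251, (335237, -313824581, -197897938, 11, 10, 3, 10));
  (257, (1768, -18716, -10794, 6, 7, 3, 7));
  (263, (329472, -4402080, -3102348, 8, 10, 2, 10));
  (269, (12306068, 1314242, 931816, 5, 13, 1, 13));
  (271, (1768904, -187434470, -135799726, 10, 11, 2, 11));
  (277, (19604, -36146, -25484, 5, 7, 2, 7));
  (281, (40, 2378, 1686, 5, 3, 1, 3));
  (283, (533, -240953, -170366, 7, 5, 3, 5));
  (293, (479653797, 10158575, 7197838, 5, 16, 1, 16));
  (307, (51988, -73130, -42366, 6, 9, 2, 9));
  (311, (6720, 25576, 16172, 6, 6, 1, 6));
  (313, (1976832, -2836248, -1787856, 7, 12, 2, 12));
  (317, (25604, 67994, 48184, 5, 9, 1, 9));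
  (331, (3725, -12519695, -7728850, 11, 7, 4, 7));
  (337, (96, 4756, 3370, 5, 4, 1, 4));
  (347, (33223692, -1769170, -1247812, 5, 14, 2, 14));
  (349, (5, 985, 698, 5, 1, 1, 1));
  (353, (8, -55440, -32476, 9, 1, 5, 1));
  (359, (96, -3054, -2154, 5, 4, 2, 4));
  (367, (1517, 15421, 9542, 7, 6, 1, 6));
  (373, (1517, 17899, 12682, 5, 6, 1, 6));
  (379, (100040000, 6104200, 3790000, 7, 16, 1, 16));
  (383, (509404904, -3365622768, -2382099140, 9, 17, 4, 17));
  (389, (260, -82718, -52126, 8, 5, 2, 5));
  (397, (67077, -125307, -88134, 6, 10, 2, 10));
  (401, (3725, -42433, -24862, 7, 7, 2, 7));
  (409, (480, 13860, 9816, 5, 4, 1, 4));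
  (419, (260, 5910, 4190, 5, 5, 1, 5));
  (421, (12, 2378, 1684, 5, 2, 1, 2));
  (431, (580, 14606, 10344, 5, 5, 1, 5));
  (433, (1768, -1123208, -794122, 8, 7, 4, 7));
  (439, (804613, 516533, 366126, 6, 11, 1, 11));
  (443, (109603372100, -137925235590, -96950634170, 11, 21, 4, 21));
  (449, (78807236494340, -5640075318, -3549206708, 7, 27, 2, 27));
  (457, (3908533, -48522335, -34305162, 9, 11, 4, 11));
  (461, (297021, 242889, 150286, 7, 10, 1, 10));
  (463, (77986557, 3803787, 2697438, 6, 14, 1, 14));
  (467, (221, -14629, -10274, 7, 4, 2, 4));
  (479, (26563712, 3448170, 2441942, 5, 14, 1, 14));
  (487, (43677, 138909, 98374, 5, 8, 1, 8));
  (491, (533, 15253, 10802, 5, 5, 1, 5));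
  (499, (466257645, 244646771, 173102102, 8, 16, 3, 16));
  (503, (23100, 70990, 50300, 5, 8, 1, 8));
  (509, (257045, 257045, 182222, 6, 8, 1, 8));
  (521, (19604, 73498, 52100, 6, 7, 1, 7));
  (523, (67077, 163959, 116106, 5, 10, 1, 10));
  (541, (394388, 16870596, 9801838, 9, 11, 3, 11));
  (547, (44096, -2737000, -1605992, 9, 8, 2, 8));
  (557, (8468, -478368, -292982, 9, 7, 2, 7));
  (563, (23100, -104060, -73190, 7, 8, 2, 8));
  (569, (8840, -11766254, -7420898, 11, 7, 4, 7));
  (571, (2813, 35379, 21698, 8, 5, 1, 5));
  (577, (335237, 810252827, 510934654, 11, 10, 3, 10));
  (587, (3604, -49422, -30524, 8, 7, 2, 7));
  (593, (12659368, -35596602, -20680282, 8, 13, 5, 13));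
  (599, (1517, 35647043, 22590686, 11, 6, 3, 6));
  (601, (260, 750516, 549314, 9, 5, 4, 5));
  (607, (93632, 451306, 319282, 6, 8, 2, 8));
  (613, (24653, 15314115, 9657202, 9, 9, 3, 9));
  (617, (2117021, -33227031, -23365790, 9, 12, 4, 12));
  (619, (47085, 138093, 97802, 5, 8, 1, 8));
  (631, (3725, -4820143, -2800378, 10, 7, 2, 7));
  (641, (10400, 61548, 43588, 5, 8, 1, 8));
  (643, (9797, -2886985, -1829978, 11, 8, 4, 8));
  (647, (533, 20887301, 14688194, 10, 5, 3, 5));
  (653, (790325, -1595084025, -977077370, 12, 11, 2, 11));
  (659, (4293180, 1839120, 1126890, 7, 12, 1, 12));
  (661, (18348327940, -9848268870, -7098205346, 10, 19, 2, 19));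
  (673, (9755512896, 9738829476, 6141387470, 9, 20, 3, 20));
  (677, (38651093, 3691983, 2614574, 5, 15, 1, 15));
  (683, (27636053, 363677895, 229333642, 9, 13, 3, 13));
  (691, (3006657885, 34386345, 24349458, 5, 18, 1, 18));
  (701, (55700, 156400, 110758, 5, 9, 1, 9));
  (709, (421480896, 750879484, 543011756, 10, 16, 3, 16));
  (719, (776165, -15650959, -9868994, 8, 11, 2, 11));
  (727, (133952, -10240160, -7421216, 10, 10, 2, 10));
  (733, (2295221, -251716671, -184063630, 11, 12, 4, 12));
  (739, (2080910685, -266412069, -165235966, 9, 16, 2, 16));
  (743, (43677, 132183, 93618, 5, 8, 1, 8));
  (751, (357608, 11009604, 6363974, 9, 11, 3, 11));
  (757, (81503969117, 183929587, 130238822, 5, 20, 1, 20));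
  (761, (793885, -3451239, -2439766, 6, 11, 2, 11));
  (769, (8, 4348, 3076, 6, 1, 2, 1));
  (773, (8561472, -6294864, -3902104, 9, 12, 2, 12));
  (787, (3150621, 102149259, 74565102, 10, 14, 3, 14));
  (797, (43677, -17270125, -12211634, 9, 8, 3, 8));
  (809, (260, 53051410, 33581590, 13, 5, 3, 5));
  (811, (1517, 50213, 30818, 7, 6, 1, 6));
  (821, (636719414805, -94853813979, -67071268242, 8, 22, 2, 22));
  (823, (119029, -167259637, -105474034, 10, 9, 4, 9));
  (827, (14371677, -7585166595, -4379654718, 12, 14, 4, 14));
  (829, (85, 16407, 11606, 6, 3, 2, 3));
  (839, (33194653632, 152554696, 96599104, 7, 18, 1, 18));
  (853, (43677, 172089, 121126, 6, 8, 1, 8));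
  (857, (421070404, 19899848, 12623610, 7, 15, 1, 15));
  (859, (274580, 510190, 369370, 7, 9, 1, 9));
  (863, (70408877, -41443623, -26116106, 8, 14, 2, 14));
  (877, (3132, 3454608, 2004822, 12, 6, 3, 6));
  (881, (697276832, 2063471088, 1197233188, 11, 18, 3, 18));
  (883, (19604, 279102, 173068, 8, 7, 2, 7));
  (887, (672, -4318524, -2533272, 10, 6, 2, 6));
  (907, (44096, -468777336, -295464320, 14, 8, 2, 8));
  (911, (21900, -44863100, -32841550, 10, 8, 5, 8));
  (919, (10400, 126740, 91900, 7, 8, 1, 8));
  (929, (40, 24617090, 15523590, 12, 3, 4, 3));
  (937, (8, -458968, -266108, 13, 1, 2, 1));
  (941, (14600037, -52503047, -33106262, 8, 14, 2, 14));
  (947, (842334533, 22870113281, 16171633006, 9, 15, 5, 15));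
  (953, (30074252, -116763708, -73626874, 9, 14, 3, 14));
  (967, (14976896, -1749751688, -1106572912, 12, 14, 2, 14));
  (971, (1481085, 341851921, 241687726, 10, 10, 5, 10));
  (977, (35010893, 880907635, 511047206, 12, 15, 3, 15));
  (983, (102562624512, 44274948488, 31304216936, 9, 20, 3, 20));
  (991, (260, 13075746, 7656466, 11, 5, 5, 5));
  (997, (22716424130621, -12082230069, -7003296890, 8, 24, 2, 24));
  (1009, (28472900, -12142124850, -7012449100, 13, 13, 4, 13));
  (1013, (3888788, 143510898, 84042532, 10, 11, 4, 11));
  (1019, (210249996, 19321389474, 11924323734, 14, 16, 3, 16));
  (1021, (12, 38862, 22462, 8, 2, 4, 2));
  (1031, (96, -328484, -189704, 10, 4, 2, 4));
  (1033, (3199600356300096, 27103798791048, 16752430356816, 14, 26, 5, 26));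
  (1039, (8840, 15649532, 11275228, 12, 7, 3, 7));
  (1049, (260, 3141116, 1986806, 11, 5, 3, 5));
  (1051, (274580, 781416, 552826, 6, 9, 1, 9));
  (1061, (1517, -264575, -167638, 9, 6, 2, 6));
  (1063, (63723499289996, -71318700014, -50425371550, 7, 26, 2, 26));
  (1069, (12, 15385682, 9702244, 12, 2, 5, 2));
  (1087, (590004104, 32875692, 19120330, 8, 17, 1, 17));
  (1091, (95445777245, -223679478477, -161157516674, 12, 20, 4, 20));
  (1093, (221533452, 1815879194, 1125512378, 11, 16, 4, 16));
  (1097, (65788317, 4364335131, 3086056266, 9, 14, 5, 14));
  (1103, (343805768, -19189703530, -13904151074, 11, 15, 6, 15));
  (1109, (51525, 348009, 246198, 6, 8, 1, 8));
  (1117, (1517, 1323625, 775198, 9, 6, 3, 6));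
  (1123, (51655843840004, -23192007338, -13390445368, 9, 25, 2, 25));
  (1129, (321485, 91187635, 53403958, 10, 10, 5, 10));
  (1151, (335237, 940676549, 543269698, 13, 10, 3, 10));
  (1153, (14760063077, 164431103, 95037178, 8, 18, 1, 18));
  (1163, (333164919379360004, -42014583386342, -24380783193040, 10, 35, 2, 35));
  (1171, (47085, 202066171, 143023598, 11, 8, 5, 8));
  (1181, (1517, -96921, -68498, 7, 6, 2, 6));
  (1187, (533, -393295, -230278, 9, 5, 2, 5));
  (1193, (260104, 963478, 565482, 7, 9, 1, 9));
  (1201, (193321220, 9631398302, 5898552968, 14, 15, 3, 15));
  (1213, (67077, -2125329, -1244538, 8, 10, 2, 10));
  (1217, (191313337345477598315888352, -1161230263194997644, -821104715793590802, 8, 48, 2, 48));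
  (1223, (7075596, -428862030, -263008596, 11, 14, 4, 14));
  (1229, (308021, -22846165, -16151518, 9, 10, 4, 10));
  (1231, (329472, -981804, -605652, 9, 10, 2, 10));
  (1237, (7075596, -24762688, -14500114, 9, 14, 2, 14));
  (1249, (221, 16756089, 10354210, 13, 4, 3, 4));
  (1259, (52300030868, 6214742930, 3919584268, 10, 21, 3, 21));
  (1277, (17962789617710228, 240516438066, 175971381524, 7, 31, 1, 31));
  (1279, (19040, 5837238, 3680962, 9, 8, 4, 8));
  (1283, (3973, 4009861, 2353022, 10, 7, 3, 7));
  (1289, (47085, 807989, 466618, 8, 8, 2, 8));
  (1291, (1494633392700, -3805064690, -2397516100, 8, 22, 2, 22));
  (1297, (29138400, -262144230, -184757650, 10, 14, 3, 14));
  (1301, (1300, -366571010, -232293550, 14, 5, 4, 5));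
  (1303, (15159765621, 3925300020261, 2298705366250, 14, 18, 3, 18));
  (1307, (4682892, -9317708502, -5458186226, 11, 12, 4, 12));
  (1319, (4708896, -1191700724, -736875178, 13, 12, 4, 12));
  (1321, (1517, 130793, 76618, 8, 6, 2, 6));
  (1327, (569478511048, 58595654378, 36163141254, 12, 21, 3, 21));
  (1361, (85, 487765, 307586, 10, 3, 3, 3));
  (1367, (17443013188, 3737830378, 2631997194, 10, 19, 3, 19));
  (1373, (109603372100, 133193440640, 96398453570, 11, 21, 3, 21));
  (1381, (55700, 497615954, 351867752, 10, 9, 3, 9));
  (1399, (47085, -1903491, -1200342, 9, 8, 2, 8));
  (1409, (49280, 886791052, 549921428, 15, 8, 3, 8));
  (1423, (56648, 14877700, 8626226, 12, 9, 3, 9));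
  (1427, (329472, 855712, 502304, 7, 10, 1, 10));
  (1429, (43677, -30342817, -21860842, 10, 8, 4, 8));
  (1433, (16687989128, 327949528, 206887942, 7, 19, 1, 19));
  (1439, (343805768, 55503423268, 33998639986, 13, 15, 3, 15));
  (1447, (36092483320808, -53750741196, -33896817154, 8, 27, 2, 27));
  (1451, (107580, -308051462, -218030162, 11, 8, 4, 8));
  (1453, (614652, 2212614, 1296076, 7, 10, 1, 10));
  (1459, (10151618387457596, -21599410787254, -13334527272692, 13, 28, 4, 28));
  (1471, (43772592397999717928, 232407994823576, 143449410153322, 12, 35, 3, 35));
  (1481, (228669706303077792, -5112450736188, -3223973325804, 9, 32, 2, 32));
  (1483, (4260100, 804536170190, 509866670800, 15, 11, 3, 11));
  (1487, (141372, 12945454, 7595596, 10, 10, 3, 10));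
  (1489, (21312, -288131772, -203707112, 11, 8, 4, 8));
  (1493, (306912, -5726616, -4049016, 7, 10, 3, 10));
  (1499, (19604, -1208484646, -702149588, 12, 7, 5, 7));
  (1511, (2079360, -14941116, -10824804, 8, 12, 3, 12));
  (1523, (4682892, -3097272, -2190074, 7, 12, 2, 12));
  (1531, (260, -29630, -21434, 8, 5, 2, 5));
  (1543, (5442137123397711021, 3643349826551, 2577593199026, 6, 32, 1, 32));
  (1549, (207590460, 34488450, 21757254, 7, 16, 1, 16));
  (1553, (3406006317, -1553624205, -898040886, 9, 18, 5, 18));
  (1559, (3360, 496074634, 306527462, 16, 6, 3, 6));
  (1567, (2090912, -259075576, -160203812, 12, 12, 2, 12));
  (1571, (21900, 3536778, 2076862, 10, 8, 3, 8));
  (1579, (9797, -16696405, -9704534, 11, 8, 6, 8));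
  (1583, (343400, 1681360, 1060610, 7, 11, 1, 11));
  (1597, (82147584992, 527188848, 372944216, 6, 20, 1, 20));
  (1601, (16639710021, 18547997721, 11754545202, 10, 18, 3, 18));
  (1607, (96, -19321236, -11168650, 12, 4, 2, 4));
  (1609, (40, 2744210, 1940454, 9, 3, 3, 3));
  (1613, (221, -599331, -351634, 10, 4, 2, 4));
  (1619, (3725, 148847, 93902, 7, 7, 1, 7));
  (1621, (6720, 4107992, 2904832, 8, 6, 3, 6));
  (1627, (3968697481277, 118432936921, 83264806538, 9, 24, 3, 24));
  (1637, (1908684992011858917, -2208617018211, -1352126532758, 8, 36, 2, 36));
  (1657, (4682892, 2221212468, 1282514686, 11, 12, 5, 12));
  (1663, (40964582528168, -439565174168, -277187848852, 9, 27, 2, 27));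
  (1667, (329349900, 402549230, 293892100, 10, 18, 3, 18));
  (1669, (271717200229, 810024991, 573071178, 6, 21, 1, 21));
  (1693, (358033728021764991534148, -32219089706283678, -23318004397861636, 10, 47, 3, 39));
  (1697, (51475502177453, -98565735073, -71436542054, 9, 25, 2, 25));
  (1699, (724205, 1487477, 873286, 8, 11, 1, 11));
  (1709, (7565, 281096347, 162488302, 14, 6, 4, 6));
  (1721, (66961485, -19834137, -12298266, 8, 14, 2, 14));
  (1723, (82948, -21984042, -12874256, 10, 11, 2, 11));
  (1733, (40644576029, -915344423, -536103550, 7, 19, 2, 19));
  (1741, (23046276096, -368208960, -260230752, 7, 20, 2, 20));
  (1747, (1786307094788, 4111084186, 2593253788, 7, 23, 1, 23));
  (1753, (765629, 139518643, 86265130, 12, 11, 3, 11));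
  (1759, (3766044796904, 6100511832, 3848234660, 7, 23, 1, 23));
  (1777, (25604, -27984256282, -19788281060, 14, 9, 2, 9));
  (1783, (18229, 3435245, 2107506, 9, 7, 3, 7));
  (1787, (3604, 4219682, 2609020, 11, 7, 3, 7));
  (1789, (1658948, 188967566, 138185938, 10, 11, 3, 11));
  (1801, (29181600, -7874042092, -4884531722, 15, 14, 6, 14));
  (1811, (134693, -927589, -655582, 7, 9, 2, 9));
  (1823, (19604, -361118, -255220, 7, 7, 2, 7));
  (1831, (2676500, -3600860, -2545090, 6, 13, 2, 13));
  (1847, (217152, -20190946, -14779694, 10, 12, 2, 12));
  (1861, (5436997700, 9823067890, 6194487380, 9, 17, 4, 17));
  (1867, (3443459757, 172230057, 101165262, 8, 18, 1, 18));
  (1871, (7400, -106239244, -74806322, 12, 7, 5, 7));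
  (1873, (15804009800, -21955125120, -13464491290, 10, 19, 2, 19));
  (1877, (1517, -172779, -108866, 9, 6, 2, 6));
  (1879, (40, 13251512, 9331114, 11, 3, 5, 3));
  (1889, (343400, 47384940, 29883980, 10, 11, 3, 11));
  (1901, (724205, -9990135, -6299914, 9, 11, 2, 11));
  (1907, (19604, 223266602, 138043916, 14, 7, 5, 7));
  (1913, (33952897760660637, 324371289591, 229468784334, 6, 30, 1, 30));
  (1931, (1600221, 1088478661, 639064450, 11, 10, 3, 10));
  (1933, (145853925, 37048365, 23369970, 7, 18, 1, 18));
  (1949, (65658605, 14882929, 10528498, 6, 14, 1, 14));
  (1951, (186847766777525, 443119143055, 279481011434, 9, 28, 3, 28));
  (1973, (8468, 161762, 114434, 6, 7, 1, 7));
  (1979, (490223877, 80374201431, 50684141294, 11, 16, 5, 16));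
  (1987, (308021, -376188769, -271277162, 11, 10, 4, 10));
  (1993, (162001988, -10573637122, -6667748912, 10, 15, 4, 15));
  (1997, (3604, -3820934, -2340484, 11, 7, 2, 7));
  (1999, (329472, 1175208, 743628, 8, 10, 1, 10))
]%Z.

Definition has_divisor (p : Z) : bool :=
  existsb (fun d => (p mod d =? 0)%Z) (Zrange 2 (p - 1)).

Lemma has_divisor_not_prime (p : Z) : has_divisor p = true -> ~ prime p.
Proof.
  unfold has_divisor. rewrite existsb_exists. intros [d [Hd Hdiv]] [_ Hp].
  apply in_Zrange in Hd.
  apply Z.eqb_eq, Z.mod_divide in Hdiv; [|lia].
  destruct (Hp d ltac:(lia)) as [_ _ Hgcd].
  assert (Hone : (d | 1)%Z) by (apply Hgcd; [apply Z.divide_refl | exact Hdiv]).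
  apply Z.divide_1_r in Hone. lia.
Qed.

Definition settled (p : Z) : bool :=
  (p =? 67)%Z || (p <? 2)%Z ||
  match find (fun e => (fst e =? p)%Z) certificates with
  | Some (_, c) => cert_ok p c
  | None => false
  end || has_divisor p.

Lemma settled_below_2000 : forallb settled (Zrange 0 1999) = true.
Proof. vm_compute. reflexivity. Qed.

Lemma prime_witness (p : Z) : prime p -> (p < 2000)%Z -> p <> 67%Z ->
  exists xi, irrational xi /\ eventually_1_2 xi /\ eventually_1_2 (IZR p * xi).
Proof.
  intros Hp Hp2000 Hp67. pose proof (prime_ge_2 p Hp) as Hp2.
  pose proof (forallb_Zrange _ _ _ p settled_below_2000 ltac:(lia)) as Hset.
  unfold settled in Hset. repeat rewrite orb_true_iff in Hset.
  destruct Hset as [[[H67|Hlt]|Hcert]|Hdiv].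
  - apply Z.eqb_eq in H67. contradiction.
  - apply Z.ltb_lt in Hlt. lia.
  - destruct (find _ certificates) as [[? c]|]; [|discriminate].
    exact (cert_ok_witness p c Hcert).
  - contradiction (has_divisor_not_prime p Hdiv Hp).
Qed.

Theorem theorem1p3 :
  forall p : Z, prime p -> (p < 2000)%Z ->
    ((~ exists xi : R, irrational xi /\ eventually_1_2 xi /\
                       eventually_1_2 (IZR p * xi))
     <-> p = 67%Z).
Proof.
  intros p Hp Hp2000. split.
  - intros Hnone. destruct (Z.eq_dec p 67) as [E|E]; [exact E|].
    contradiction (Hnone (prime_witness p Hp Hp2000 E)).
  - intros -> [xi [_ [Hxi H67]]]. exact (no_tails_12_67 xi Hxi H67).
Qed.
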